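(* Let $R$ be a multivariate convex risk measure and $v\in\mathbb{R}^J$. For every $u\in\mathbb{L}^J$, $$\inf\{\alpha\in\mathbb{R}\mid v+\alpha\mathbf{1}\in R(u)\}=\sup\Big\{\gamma^{\mathsf T}\big(\mathbb{E}^\mu[u]-v\big)-\beta(\mu,\gamma)\ \Big|\ \mu\in\mathbb{M}_1^J,\ \gamma\in\mathbb{R}^J_+,\ \gamma^{\mathsf T}\mathbf{1}=1\Big\}.$$
   Context: Probability space: $\Omega=\{1,\dots,I\}$, $I\ge 2$, with probabilities $p_i>0$. $\mathbb{L}^J$ denotes random vectors $u=(u_1,\dots,u_I)$, $u_i\in\mathbb{R}^J$; $u\le v$ means $u_i^j\le v_i^j$ for all $i,j$. $\mathbf{1}=(1,\dots,1)^{\mathsf T}\in\mathbb{R}^J$. A multivariate convex risk measure is a map $R:\mathbb{L}^J\to 2^{\mathbb{R}^J}$ such that: (A1) $u\le v$ implies $R(u)\supseteq R(v)$; (A2) $R(u+z)=R(u)+z$ for all $z\in\mathbb{R}^J$; (A3) $R(u)\notin\{\emptyset,\mathbb{R}^J\}$; (A4) $R(\gamma u+(1-\gamma)v)\supseteq\gamma R(u)+(1-\gamma)R(v)$ for $\gamma\in(0,1)$; (A5) the acceptance set $\mathcal{A}=\{u\in\mathbb{L}^J\mid 0\in R(u)\}$ is closed. $\mathbb{M}_1^J$ denotes the set of $J$-tuples $\mu=(\mu^1,\dots,\mu^J)$ of probability measures on $\Omega$, with $\mu_i=(\mu_i^1,\dots,\mu_i^J)^{\mathsf T}$, and $\mathbb{E}^\mu[u]=\sum_{i\in\Omega}\mu_i\cdot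 u_i$, where $\cdot$ is the componentwise (Hadamard) product. The minimal penalty function is $\beta(\mu,w)=\sup_{u\in\mathcal{A}}w^{\mathsf T}\mathbb{E}^\mu[u]$ for $\mu\in\mathbb{M}_1^J$, $w\in\mathbb{R}^J_+\setminus\{0\}$; it is known that $\inf_{z\in R(u)}w^{\mathsf T}z=\sup_{\mu\in\mathbb{M}_1^J}(w^{\mathsf T}\mathbb{E}^\mu[u]-\beta(\mu,w))$ for all $u$ and $w\in\mathbb{R}^J_+\setminus\{0\}$. *)

From Stdlib Require Import Reals.
From mathcomp Require Import all_boot.
Set Implicit Arguments.
Unset Strict Implicit.
Unset Printing Implicit Defensive.

Open Scope R_scope.

Definition rsum (n : nat) (F : 'I_n -> R) : R := \big[Rplus/0]_(i < n) F i.

(* R^J and L^J = random vectors on Omega = {0,...,I-1} with values in R^J *)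
Definition vecR (J : nat) := 'I_J -> R.
Definition LJ (I J : nat) := 'I_I -> 'I_J -> R.

Definition one_vec (J : nat) : vecR J := fun _ => 1.
Definition dot (J : nat) (w z : vecR J) : R := rsum (fun j => w j * z j).

Definition leL (I J : nat) (u v : LJ I J) : Prop := forall i j, u i j <= v i j.
Definition addc (I J : nat) (u : LJ I J) (z : vecR J) : LJ I J := fun i j => u i j + z j.
Definition convL (I J : nat) (g : R) (u v : LJ I J) : LJ I J :=
  fun i j => g * u i j + (1 - g) * v i j.

(* closedness in L^J ~ R^(I*J) (sup-norm balls; same topology as Euclidean) *)
Definition closedL (I J : nat) (A : LJ I J -> Prop) : Prop :=
  forall u, ~ A u -> exists eps, 0 < eps /\
    forall w, (forall i j, Rabs (w i j - u i j) < eps) -> ~ A w.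

(* a set-valued map R : L^J -> 2^(R^J), sets represented as predicates *)
Definition setmap (I J : nat) := LJ I J -> vecR J -> Prop.

Definition acceptance (I J : nat) (Rm : setmap I J) : LJ I J -> Prop :=
  fun u => Rm u (fun _ => 0).

Definition multivariate_convex_risk_measure (I J : nat) (Rm : setmap I J) : Prop :=
  (forall u v, leL u v -> forall z, Rm v z -> Rm u z) /\
  (forall u z x, Rm (addc u z) x <-> exists y, Rm u y /\ x = (fun j => y j + z j)) /\
  (forall u, (exists x, Rm u x) /\ (exists x, ~ Rm u x)) /\
  (forall g u v, 0 < g < 1 -> forall x y, Rm u x -> Rm v y ->
      Rm (convL g u v) (fun j => g * x j + (1 - g) * y j)) /\
  closedL (acceptance Rm).

(* M_1^J: J-tuples of probability measures on Omega; mu j i = mu^j({i}) *)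
Definition M1 (I J : nat) (mu : 'I_J -> 'I_I -> R) : Prop :=
  (forall j i, 0 <= mu j i) /\ (forall j, rsum (fun i => mu j i) = 1).

Definition Emu (I J : nat) (mu : 'I_J -> 'I_I -> R) (u : LJ I J) : vecR J :=
  fun j => rsum (fun i => mu j i * u i j).

(* the set whose supremum is the minimal penalty beta(mu, w) *)
Definition penalty_set (I J : nat) (Rm : setmap I J) (mu : 'I_J -> 'I_I -> R)
  (w : vecR J) : R -> Prop :=
  fun x => exists u, acceptance Rm u /\ x = dot w (Emu mu u).

Definition is_glb (E : R -> Prop) (m : R) : Prop :=
  (forall x, E x -> m <= x) /\ (forall b, (forall x, E x -> b <= x) -> b <= m).

From Stdlib Require Import Reals.
From mathcomp Require Import all_boot.
From HB Require Import structures.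
From Stdlib Require Import Lra Lia Classical ClassicalEpsilon FunctionalExtensionality.
Open Scope R_scope.
Set Implicit Arguments.
Unset Strict Implicit.

(* Weak duality is a direct consequence of the definition of the minimal penalty.
   For the converse, if [v + a 1] is not in [R(u)] then [w := u - v - a 1] lies
   outside the closed convex acceptance set; its Euclidean projection [s] onto
   that set (a limit of a minimizing sequence, which is Cauchy by the
   parallelogram law) gives a normal vector [w - s], nonnegative by monotonicity
   and nonzero.  Normalizing it column by column yields a pair [(mu, gamma)] whose
   dual objective exceeds [a]. *)

HB.instance Definition _ := Monoid.isComLaw.Build R 0 Rplus
  (fun x y z => esym (Rplus_assoc x y z)) Rplus_comm Rplus_0_l.

Lemma eq_rsum n (f g : 'I_n -> R) : (forall i, f i = g i) -> rsum f = rsum g.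
Proof. by move=> fg; apply: eq_bigr. Qed.

Lemma rsumD n (f g : 'I_n -> R) : rsum (fun i => f i + g i) = rsum f + rsum g.
Proof. exact: big_split. Qed.

Lemma rsumZ n c (f : 'I_n -> R) : rsum (fun i => c * f i) = c * rsum f.
Proof. rewrite /rsum; elim/big_rec2: _ => [|i y1 y2 _ ->]; ring. Qed.

Lemma rsum0 n : rsum (fun _ : 'I_n => 0) = 0.
Proof. exact: big1. Qed.

Lemma ler_rsum n (f g : 'I_n -> R) : (forall i, f i <= g i) -> rsum f <= rsum g.
Proof. by move=> fg; apply: (big_ind2 (fun a b => a <= b)) => // *; lra. Qed.

Lemma rsum_ge0 n (f : 'I_n -> R) : (forall i, 0 <= f i) -> 0 <= rsum f.
Proof. by move=> f0; rewrite -(rsum0 n); apply: ler_rsum. Qed.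

Lemma ler_rsum_term n (f : 'I_n -> R) k : (forall i, 0 <= f i) -> f k <= rsum f.
Proof.
move=> f0; rewrite /rsum (bigD1 k) //=.
have : 0 <= \big[Rplus/0]_(i < n | i != k) f i.
  by apply: big_ind => [|x y|i _]; [lra | lra | exact: f0].
by move: (\big[Rplus/0]_(i < n | _) _) => r; lra.
Qed.

Lemma rsum_delta n (k : 'I_n) c : rsum (fun i => if i == k then c else 0) = c.
Proof. by rewrite /rsum (bigD1 k) //= eqxx big1 ?Rplus_0_r // => i /negPf ->. Qed.

Section DoubleSums.
Variables I J : nat.

Definition dsum (F : LJ I J) : R := rsum (fun j => rsum (fun i => F i j)).

Definition nrm2 (x : LJ I J) : R := dsum (fun i j => x i j * x i j).

Lemma eq_dsum (F G : LJ I J) : (forall i j, F i j = G i j) -> dsum F = dsum G.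
Proof. by move=> FG; apply: eq_rsum => j; apply: eq_rsum. Qed.

Lemma dsum_comb3 c1 c2 c3 (F G H : LJ I J) :
  c1 * dsum F + c2 * dsum G + c3 * dsum H
  = dsum (fun i j => c1 * F i j + c2 * G i j + c3 * H i j).
Proof.
rewrite /dsum -!rsumZ -!rsumD; apply: eq_rsum => j.
by rewrite -!rsumZ -!rsumD.
Qed.

Lemma ler_dsum (F G : LJ I J) : (forall i j, F i j <= G i j) -> dsum F <= dsum G.
Proof. by move=> FG; apply: ler_rsum => j; apply: ler_rsum. Qed.

Lemma dsum_ge0 (F : LJ I J) : (forall i j, 0 <= F i j) -> 0 <= dsum F.
Proof. by move=> F0; apply: rsum_ge0 => j; apply: rsum_ge0. Qed.

Lemma ler_dsum_term (F : LJ I J) i j : (forall i j, 0 <= F i j) -> F i j <= dsum F.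
Proof.
move=> F0; apply: Rle_trans (ler_rsum_term (f := fun i => F i j) i (F0^~ j)) _.
by apply: (ler_rsum_term (f := fun j => rsum (fun i => F i j))) => k; apply: rsum_ge0.
Qed.

Lemma dsum_delta i0 j0 c :
  dsum (fun i j => if (i == i0) && (j == j0) then c else 0) = c.
Proof.
rewrite /dsum -[RHS](rsum_delta j0); apply: eq_rsum => j.
have [_|_] := boolP (j == j0).
  by rewrite -[RHS](rsum_delta i0 c); apply: eq_rsum => i; rewrite andbT.
by rewrite -[RHS](rsum0 I); apply: eq_rsum => i; rewrite andbF.
Qed.

Lemma nrm2_ge0 x : 0 <= nrm2 x.
Proof. by apply: dsum_ge0 => i j; nra. Qed.

Lemma sqr_le_nrm2 x i j : x i j * x i j <= nrm2 x.
Proof. by apply: (ler_dsum_term (F := fun i j => x i j * x i j)) => k l; nra. Qed.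

End DoubleSums.

Lemma is_glb_exists (E : R -> Prop) :
  (exists x, E x) -> (exists K, forall x, E x -> K <= x) -> exists m, is_glb E m.
Proof.
move=> [x0 Ex0] [K EK].
have bnd : bound (fun y => E (- y)) by exists (- K) => y /EK; lra.
have ne : exists y, E (- y) by exists (- x0); rewrite /= Ropp_involutive.
have [M [ubM lubM]] := completeness _ bnd ne.
exists (- M); split.
  by move=> x Ex; have := ubM (- x) ltac:(by rewrite /= Ropp_involutive); lra.
move=> b lbb; have : M <= - b by apply: lubM => y /lbb; lra.
lra.
Qed.

Lemma is_glb_approx (E : R -> Prop) m e :
  is_glb E m -> 0 < e -> exists x, E x /\ x < m + e.
Proof.
move=> [_ glb] e0; apply: NNPP => nox.
have : m + e <= m; last lra.
by apply: glb => x Ex; apply: Rnot_lt_le => lt; apply: nox; exists x.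
Qed.

Lemma inv_succ_lt (d : R) : 0 < d -> exists N, forall n, le N n -> / (INR n + 1) < d.
Proof.
move=> d0; have [N [invN N0]] := archimed_cor1 d d0; exists N => n Nn.
have : INR N <= INR n by apply: le_INR.
have : 0 < INR N by apply: lt_0_INR.
by move=> *; apply: Rle_lt_trans invN; apply: Rinv_le_contravar; lra.
Qed.

Lemma Rabs_lt_of_sqr_lt x e : 0 < e -> x * x < e * e -> Rabs x < e.
Proof. by move=> e0 xe; split_Rabs; nra. Qed.

Lemma Rabs_sub_cv_le (U : nat -> R) l c N d :
  Un_cv U l -> (forall m, le N m -> Rabs (c - U m) < d) -> Rabs (c - l) <= d.
Proof.
move=> Ul Ud; apply: Rnot_lt_le => lt.
have [M UM] := Ul (Rabs (c - l) - d) ltac:(lra).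
have := UM (Nat.max N M) ltac:(lia); have := Ud (Nat.max N M) ltac:(lia).
by rewrite /R_dist; split_Rabs; lra.
Qed.

Section UniformLimits.
Variables I J : nat.

Definition unif_cvg (x : nat -> LJ I J) (l : LJ I J) : Prop :=
  forall d, 0 < d -> exists N, forall n, le N n -> forall i j, Rabs (x n i j - l i j) <= d.

Lemma unif_cauchy_cvg (x : nat -> LJ I J) :
  (forall d, 0 < d -> exists N, forall n m, le N n -> le N m ->
     forall i j, Rabs (x n i j - x m i j) < d) ->
  exists l, unif_cvg x l.
Proof.
move=> cau.
have cau_ij i j : Cauchy_crit (fun n => x n i j).
  move=> e e0; have [N xN] := cau e e0; exists N => n m Nn Nm; exact: xN.
exists (fun i j => proj1_sig (R_complete _ (cau_ij i j))) => d d0.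
have [N xN] := cau d d0; exists N => n Nn i j.
apply: (Rabs_sub_cv_le (N := N) (proj2_sig (R_complete _ (cau_ij i j)))) => m Nm.
exact: xN.
Qed.

Lemma closedL_unif_cvg (A : LJ I J -> Prop) (x : nat -> LJ I J) l :
  closedL A -> (forall n, A (x n)) -> unif_cvg x l -> A l.
Proof.
move=> clA Ax xl; apply: NNPP => notAl.
have [e [e0 ball_e]] := clA l notAl.
have [N xN] := xl (e / 2) ltac:(lra).
by apply: (ball_e (x N)) => // i j; have := xN N (le_n N) i j; lra.
Qed.

End UniformLimits.

Lemma sqr_sub_le_near x y z d : Rabs (z - y) <= d -> d <= 1 ->
  (x - y) * (x - y) <= (x - z) * (x - z) + d * (2 * Rabs (x - y) + 1).
Proof. by move=> zy d1; split_Rabs; nra. Qed.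

Section Projection.
Variables (I J : nat) (A : LJ I J -> Prop) (w0 : LJ I J).
Hypothesis convA : forall a b t, A a -> A b -> 0 <= t <= 1 ->
  A (fun i j => t * a i j + (1 - t) * b i j).

Definition dist2 (a : LJ I J) : R := nrm2 (fun i j => w0 i j - a i j).

Lemma approx_minimizers_close D a b ea eb i j :
  (forall c, A c -> D <= dist2 c) -> A a -> A b ->
  dist2 a <= D + ea -> dist2 b <= D + eb ->
  (a i j - b i j) * (a i j - b i j) <= 2 * ea + 2 * eb.
Proof.
move=> lbD Aa Ab da db.
pose mid := fun i j => / 2 * a i j + (1 - / 2) * b i j.
have := lbD mid (convA (t := / 2) Aa Ab ltac:(lra)).
have := sqr_le_nrm2 (fun i j => a i j - b i j) i j.
(* parallelogram law *)
have -> : nrm2 (fun i j => a i j - b i j) = 2 * dist2 a + 2 * dist2 b + (-4) * dist2 mid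
  by rewrite dsum_comb3; apply: eq_dsum => k l; rewrite /mid; field.
lra.
Qed.

Lemma minimizing_seq_cauchy D (x : nat -> LJ I J) :
  (forall c, A c -> D <= dist2 c) -> (forall n, A (x n)) ->
  (forall n, dist2 (x n) < D + / (INR n + 1)) ->
  forall d, 0 < d -> exists N, forall n m, le N n -> le N m ->
    forall i j, Rabs (x n i j - x m i j) < d.
Proof.
move=> lbD Ax dx d d0; have [N invN] := @inv_succ_lt (d * d / 4) ltac:(nra).
exists N => n m Nn Nm i j; apply: Rabs_lt_of_sqr_lt => //.
have := approx_minimizers_close i j lbD (Ax n) (Ax m) (Rlt_le _ _ (dx n)) (Rlt_le _ _ (dx m)).
by have := invN n Nn; have := invN m Nm; lra.
Qed.

Lemma dist2_le_near l e : 0 < e -> exists d, 0 < d /\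
  forall a, (forall i j, Rabs (a i j - l i j) <= d) -> dist2 l <= dist2 a + e.
Proof.
move=> e0; pose C := dsum (fun i j => 2 * Rabs (w0 i j - l i j) + 1).
have C0 : 0 <= C by apply: dsum_ge0 => i j; have := Rabs_pos (w0 i j - l i j); lra.
pose q := e / (C + 1).
have q0 : 0 < q by apply: Rdiv_lt_0_compat; lra.
have qC : q * (C + 1) = e by rewrite /q; field; lra.
exists (Rmin 1 q); split; first by apply: Rmin_glb_lt; lra.
move=> a; have := Rmin_l 1 q; have := Rmin_r 1 q; set d := Rmin 1 q => dq d1 al.
have : dist2 l <= 1 * dist2 a + d * C + 0 * C; last by nra.
rewrite /dist2 /nrm2 /C dsum_comb3; apply: ler_dsum => i j.
by have := sqr_sub_le_near (w0 i j) (al i j) d1; lra.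
Qed.

Hypothesis closedA : closedL A.
Hypothesis neA : exists a, A a.

Lemma projection_exists : exists s, A s /\ forall a, A a -> dist2 s <= dist2 a.
Proof.
have [D [lbD glbD]] : exists D, is_glb (fun y => exists a, A a /\ y = dist2 a) D.
  apply: is_glb_exists; first by have [a Aa] := neA; exists (dist2 a), a.
  by exists 0 => _ [a [_ ->]]; apply: nrm2_ge0.
have lbD' c : A c -> D <= dist2 c by move=> Ac; apply: lbD; exists c.
have appr n : exists a, A a /\ dist2 a < D + / (INR n + 1).
  have inv0 : 0 < / (INR n + 1) by apply: Rinv_0_lt_compat; have := pos_INR n; lra.
  by have [_ [[a [Aa ->]] lt]] := is_glb_approx (conj lbD glbD) inv0; exists a.
pose x n := proj1_sig (constructive_indefinite_description _ (appr n)).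
have [Ax dx] : (forall n, A (x n)) /\ (forall n, dist2 (x n) < D + / (INR n + 1)).
  by split=> n; case: (proj2_sig (constructive_indefinite_description _ (appr n))).
have [l xl] := unif_cauchy_cvg (minimizing_seq_cauchy lbD' Ax dx).
exists l; split; first exact: closedL_unif_cvg closedA Ax xl.
move=> a Aa; apply: Rle_trans (lbD' a Aa); apply: Rle_plus_epsilon => e e0.
have [d [d0 near]] := dist2_le_near l (e := e / 2) ltac:(lra).
have [N1 xN1] := xl d d0; have [N2 invN2] := @inv_succ_lt (e / 2) ltac:(lra).
have := near _ (xN1 (Nat.max N1 N2) ltac:(lia)).
by have := dx (Nat.max N1 N2); have := invN2 (Nat.max N1 N2) ltac:(lia); lra.
Qed.

Lemma projection_variational_ineq s : A s -> (forall a, A a -> dist2 s <= dist2 a) ->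
  forall a, A a -> dsum (fun i j => (w0 i j - s i j) * (a i j - s i j)) <= 0.
Proof.
move=> As mins a Aa; set P := dsum _; pose Q := nrm2 (fun i j => a i j - s i j).
have Q0 : 0 <= Q := nrm2_ge0 _.
have step t : 0 < t <= 1 -> 2 * P <= t * Q.
  move=> t01; have := mins _ (convA (t := t) Aa As ltac:(lra)).
  have -> : dist2 (fun i j => t * a i j + (1 - t) * s i j)
            = 1 * dist2 s + (-2 * t) * P + (t * t) * Q
    by rewrite dsum_comb3; apply: eq_dsum => i j; ring.
  by nra.
apply: Rnot_lt_le => P0; pose q := P / (Q + 1).
have qQ : q * (Q + 1) = P by rewrite /q; field; lra.
have q0 : 0 < q by apply: Rdiv_lt_0_compat; lra.
have t0 : 0 < Rmin 1 q by apply: Rmin_glb_lt; lra.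
have := step (Rmin 1 q) (conj t0 (Rmin_l _ _)).
by have := Rmin_r 1 q; nra.
Qed.

End Projection.

Lemma LJ_ext I J (u w : LJ I J) : (forall i j, u i j = w i j) -> u = w.
Proof.
by move=> uw; apply: functional_extensionality => i; apply: functional_extensionality.
Qed.

Lemma dot_Emu_sub_const I J (mu : 'I_J -> 'I_I -> R) (g : vecR J) (u : LJ I J)
    (v : vecR J) a :
  M1 mu -> dot g (@one_vec J) = 1 ->
  dot g (Emu mu (fun i j => u i j - (v j + a * @one_vec J j)))
  = dot g (fun j => Emu mu u j - v j) - a.
Proof.
move=> [_ mu1] g1.
have -> : dot g (fun j => Emu mu u j - v j) - a
          = dot g (fun j => Emu mu u j - v j) + - a * dot g (@one_vec J)
  by rewrite g1; ring.
rewrite /dot -rsumZ -rsumD; apply: eq_rsum => j; rewrite /Emu.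
have -> : rsum (fun i => mu j i * (u i j - (v j + a * @one_vec J j)))
          = rsum (fun i => mu j i * u i j + - (v j + a) * mu j i).
  by apply: eq_rsum => i; rewrite /one_vec; ring.
by rewrite rsumD rsumZ mu1 /one_vec; ring.
Qed.

Section ColumnNormalization.
Variables (I J : nat) (p : 'I_I -> R) (lam : LJ I J).
Hypotheses (lam0 : forall i j, 0 <= lam i j).

Definition col_mass (j : 'I_J) : R := rsum (fun i => lam i j).

(* Columns of zero mass get the arbitrary law [p]. *)
Definition col_law : 'I_J -> 'I_I -> R :=
  fun j i => if Rlt_dec 0 (col_mass j) then lam i j / col_mass j else p i.

Definition col_weight : vecR J := fun j => col_mass j / rsum col_mass.

Lemma col_mass_ge0 j : 0 <= col_mass j.
Proof. exact: rsum_ge0. Qed.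

Lemma col_law_M1 : (forall i, 0 < p i) -> rsum p = 1 -> M1 col_law.
Proof.
move=> p0 p1; split=> j; rewrite /col_law; case: Rlt_dec => mj0 //.
- move=> i; apply: Rmult_le_pos; first exact: lam0.
  by apply: Rlt_le; apply: Rinv_0_lt_compat.
- by move=> i; apply: Rlt_le.
- rewrite (eq_rsum (g := fun i => / col_mass j * lam i j)) ?rsumZ -/(col_mass j).
    by field; lra.
  by move=> i; rewrite Rmult_comm.
Qed.

Hypothesis mass0 : 0 < rsum col_mass.

Lemma col_weight_ge0 j : 0 <= col_weight j.
Proof.
apply: Rmult_le_pos; first exact: col_mass_ge0.
by apply: Rlt_le; apply: Rinv_0_lt_compat.
Qed.

Lemma col_weight_sum1 : dot col_weight (@one_vec J) = 1.
Proof.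
rewrite /dot (eq_rsum (g := fun j => / rsum col_mass * col_mass j)) ?rsumZ.
  by field; lra.
by move=> j; rewrite /col_weight /one_vec; field; lra.
Qed.

Lemma dsum_col_decomp (a : LJ I J) :
  dsum (fun i j => lam i j * a i j) = rsum col_mass * dot col_weight (Emu col_law a).
Proof.
rewrite /dot -rsumZ /dsum; apply: eq_rsum => j.
rewrite /col_weight /Emu /col_law; case: Rlt_dec => mj0 /=.
  rewrite [in RHS](eq_rsum (g := fun i => / col_mass j * (lam i j * a i j))) ?rsumZ.
    by field; lra.
  by move=> i; field; lra.
have mj : col_mass j = 0 by have := col_mass_ge0 j; lra.
rewrite mj Rdiv_0_l Rmult_0_l Rmult_0_r -(rsum0 I); apply: eq_rsum => i.
have -> : lam i j = 0; last by ring.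
by have := lam0 i j; have := ler_rsum_term i (lam0^~ j); rewrite -/(col_mass j); lra.
Qed.

End ColumnNormalization.

Section RiskMeasure.
Variables (I J : nat) (Rm : setmap I J).
Hypothesis hR : multivariate_convex_risk_measure Rm.

Definition level_set (u : LJ I J) (v : vecR J) : R -> Prop :=
  fun a => Rm u (fun j => v j + a * @one_vec J j).

Definition dual_objectives (u : LJ I J) (v : vecR J) : R -> Prop :=
  fun x => exists (mu : 'I_J -> 'I_I -> R) (g : vecR J) (b : R),
    M1 mu /\ (forall j, 0 <= g j) /\ dot g (@one_vec J) = 1 /\
    is_lub (penalty_set Rm mu g) b /\
    x = dot g (fun j => Emu mu u j - v j) - b.

Lemma rm_translate u x z : Rm u x -> Rm (addc u z) (fun j => x j + z j).
Proof. by case: hR => _ [trans _] ux; apply/trans; exists x. Qed.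

Lemma rm_acceptanceE u z : Rm u z <-> acceptance Rm (fun i j => u i j - z j).
Proof.
split=> h.
- have := rm_translate (fun j => - z j) h; rewrite /acceptance.
  have -> : addc u (fun j => - z j) = (fun i j => u i j - z j) by apply: LJ_ext.
  by have -> : (fun j => z j + - z j) = (fun _ => 0)
    by apply: functional_extensionality => j; ring.
- have := rm_translate z h.
  have -> : addc (fun i j => u i j - z j) z = u by apply: LJ_ext => i j; rewrite /addc; ring.
  by have -> : (fun j => 0 + z j) = z by apply: functional_extensionality => j; ring.
Qed.

Lemma acceptance_mono a b : leL a b -> acceptance Rm b -> acceptance Rm a.
Proof. by case: hR => mono _ ab; apply: mono. Qed.

Lemma rm_upward u x y : Rm u x -> (forall j, x j <= y j) -> Rm u y.
Proof.
move=> /rm_acceptanceE ux xy; apply/rm_acceptanceE; apply: acceptance_mono ux.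
by move=> i j; have := xy j; lra.
Qed.

Lemma acceptance_convex a b t : acceptance Rm a -> acceptance Rm b -> 0 <= t <= 1 ->
  acceptance Rm (fun i j => t * a i j + (1 - t) * b i j).
Proof.
move=> Aa Ab t01; case: (Req_dec t 0) => [->|t0].
  by have -> : (fun i j => 0 * a i j + (1 - 0) * b i j) = b by apply: LJ_ext => i j; ring.
case: (Req_dec t 1) => [->|t1].
  by have -> : (fun i j => 1 * a i j + (1 - 1) * b i j) = a by apply: LJ_ext => i j; ring.
case: hR => _ [_ [_ [conv _]]]; have := conv t a b ltac:(lra) _ _ Aa Ab.
by have -> : (fun j : 'I_J => t * 0 + (1 - t) * 0) = (fun _ => 0)
  by apply: functional_extensionality => j; ring.
Qed.

Lemma acceptance_nonempty : exists a, acceptance Rm a.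
Proof.
case: hR => _ [_ [nontriv _]]; have [[x /rm_acceptanceE Ax] _] := nontriv (fun _ _ => 0).
by eexists; exact: Ax.
Qed.

Lemma acceptance_normal_ge0 s lam : acceptance Rm s ->
  (forall a, acceptance Rm a -> dsum (fun i j => lam i j * (a i j - s i j)) <= 0) ->
  forall i j, 0 <= lam i j.
Proof.
move=> As normal i0 j0.
pose e i j := if (i == i0) && (j == j0) then 1 else 0.
have Ase : acceptance Rm (fun i j => s i j - e i j).
  by apply: acceptance_mono As => i j; rewrite /e; case: (_ && _); lra.
have := normal _ Ase.
have -> : dsum (fun i j => lam i j * (s i j - e i j - s i j))
          = dsum (fun i j => if (i == i0) && (j == j0) then - lam i0 j0 else 0).
  by apply: eq_dsum => i j; rewrite /e; case: (i =P i0) => [->|_]; case: (j =P j0) => [->|_];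
    rewrite /= ?andbF; ring.
by rewrite dsum_delta; lra.
Qed.

Lemma weak_duality u v x a : dual_objectives u v x -> level_set u v a -> x <= a.
Proof.
move=> [mu [g [b [mu1 [_ [g1 [[ub _] ->]]]]]]] /rm_acceptanceE Aa.
have := ub _ (ex_intro _ _ (conj Aa erefl)).
by rewrite dot_Emu_sub_const //; lra.
Qed.

Lemma level_set_glb u v : exists m, is_glb (level_set u v) m.
Proof.
have dev_le (x : vecR J) j : Rabs (x j - v j) <= rsum (fun j => Rabs (x j - v j)).
  exact: (ler_rsum_term (f := fun j => Rabs (x j - v j))) (fun k => Rabs_pos _).
case: hR => _ [_ [nontriv _]]; have [[x ux] [y0 uy0]] := nontriv u.
apply: is_glb_exists.
  exists (rsum (fun j => Rabs (x j - v j))); apply: (rm_upward ux) => j.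
  by have := dev_le x j; rewrite /one_vec; split_Rabs; lra.
exists (- rsum (fun j => Rabs (y0 j - v j))) => a ua; apply: Rnot_lt_le => lt.
apply: uy0; apply: (rm_upward ua) => j.
by have := dev_le y0 j; rewrite /one_vec; split_Rabs; lra.
Qed.

Lemma dual_objective_of_separation (p : 'I_I -> R) u v a0 s lam :
  (forall i, 0 < p i) -> rsum p = 1 ->
  (forall i j, 0 <= lam i j) -> 0 < rsum (col_mass lam) -> acceptance Rm s ->
  (forall a, acceptance Rm a ->
     dsum (fun i j => lam i j * a i j) <= dsum (fun i j => lam i j * s i j)) ->
  dsum (fun i j => lam i j * s i j)
    < dsum (fun i j => lam i j * (u i j - (v j + a0 * @one_vec J j))) ->
  exists x, dual_objectives u v x /\ a0 < x.
Proof.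
move=> p0 p1 lam0 mass0 As sep strict.
pose mu := col_law p lam; pose g := col_weight lam; pose M := rsum (col_mass lam).
have muM1 : M1 mu by apply: col_law_M1.
have g0 j : 0 <= g j by apply: col_weight_ge0.
have g1 : dot g (@one_vec J) = 1 by apply: col_weight_sum1.
have decomp a : dsum (fun i j => lam i j * a i j) = M * dot g (Emu mu a)
  := dsum_col_decomp p lam0 mass0 a.
have ub : is_upper_bound (penalty_set Rm mu g) (dot g (Emu mu s)).
  move=> _ [a [Aa ->]]; have := sep a Aa; rewrite !decomp.
  exact: Rmult_le_reg_l mass0.
have [b lub_b] :=
  completeness _ (ex_intro _ _ ub) (ex_intro _ _ (ex_intro _ s (conj As erefl))).
exists (dot g (fun j => Emu mu u j - v j) - b); split; first by exists mu, g, b.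
move: strict; rewrite !decomp dot_Emu_sub_const // => /(Rmult_lt_reg_l _ _ _ mass0).
by have := proj2 lub_b _ ub; lra.
Qed.

Lemma dual_objective_gt (p : 'I_I -> R) u v a0 : (forall i, 0 < p i) -> rsum p = 1 ->
  ~ level_set u v a0 -> exists x, dual_objectives u v x /\ a0 < x.
Proof.
move=> p0 p1 notlev; pose w := fun i j => u i j - (v j + a0 * @one_vec J j).
have notAw : ~ acceptance Rm w by move=> Aw; apply: notlev; apply/rm_acceptanceE.
have closedA : closedL (acceptance Rm) by case: hR => _ [_ [_ []]].
have [s [As mins]] := projection_exists w (@acceptance_convex) closedA acceptance_nonempty.
pose lam := fun i j => w i j - s i j.
have normal := projection_variational_ineq (@acceptance_convex) As mins.
have lam0 := acceptance_normal_ge0 As normal.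
have [i1 [j1 lam1]] : exists i j, 0 < lam i j.
  apply: NNPP => all0; apply: notAw; suff -> : w = s by [].
  apply: LJ_ext => i j; have : ~ 0 < lam i j by move=> ?; apply: all0; exists i, j.
  by have := lam0 i j; rewrite /lam; lra.
have lam_comb a : dsum (fun i j => lam i j * (a i j - s i j))
    = 1 * dsum (fun i j => lam i j * a i j) + (-1) * dsum (fun i j => lam i j * s i j)
      + 0 * nrm2 lam.
  by rewrite dsum_comb3; apply: eq_dsum => i j; ring.
apply: (dual_objective_of_separation (s := s) (lam := lam) p0 p1 lam0) => //.
- have : lam i1 j1 <= rsum (col_mass lam) := ler_dsum_term i1 j1 lam0.
  lra.
- by move=> a Aa; have := normal a Aa; rewrite lam_comb; lra.
- change (dsum (fun i j => lam i j * s i j) < dsum (fun i j => lam i j * w i j)).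
  have : nrm2 lam = 1 * dsum (fun i j => lam i j * w i j)
                    + (-1) * dsum (fun i j => lam i j * s i j) + 0 * nrm2 lam := lam_comb w.
  by have := sqr_le_nrm2 lam i1 j1; nra.
Qed.

End RiskMeasure.

Theorem lemma5p5 (I J : nat) (p : 'I_I -> R)
  (hI : (2 <= I)%nat) (hp : forall i, 0 < p i) (hp1 : rsum p = 1)
  (Rm : setmap I J) (hR : multivariate_convex_risk_measure Rm)
  (v : vecR J) (u : LJ I J) :
  exists m : R,
    is_glb (fun a => Rm u (fun j => v j + a * @one_vec J j)) m /\
    is_lub (fun x => exists (mu : 'I_J -> 'I_I -> R) (g : vecR J) (b : R),
              M1 mu /\ (forall j, 0 <= g j) /\ dot g (@one_vec J) = 1 /\
              is_lub (penalty_set Rm mu g) b /\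
              x = dot g (fun j => Emu mu u j - v j) - b) m.
Proof.
have [m [lb glb]] := level_set_glb hR u v.
exists m; split; first by split.
split.
- by move=> x dx; apply: glb => a ua; apply: (weak_duality hR dx ua).
- move=> c ubc; apply: Rnot_lt_le => cm.
  have notlev : ~ level_set Rm u v c by move=> uc; have := lb _ uc; lra.
  have [x [dx cx]] := dual_objective_gt hR hp hp1 notlev.
  by have := ubc x dx; lra.
Qed.
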